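(* Let $k\ge4$, $n\ge 2k$, and let $\mathcal F,\mathcal G\subset\binom{[n]}{k}$ be cross-intersecting. Suppose that for some $\{x,y\}\in\binom{[n]}{2}$, $$|\mathcal F(x,y)|\ge\binom{n-3}{k-3}+\binom{n-4}{k-3}+\binom{n-6}{k-4}.$$ Then $|\mathcal G(\bar x,\bar y)|\le\binom{n-5}{k-3}+\binom{n-6}{k-3}$.
   Context: Cross-intersecting: $F\cap G\ne\emptyset$ for all $F\in\mathcal F,G\in\mathcal G$. $\mathcal F(x,y)=\{F\setminus\{x,y\}:F\in\mathcal F,\ \{x,y\}\subset F\}$ and $\mathcal G(\bar x,\bar y)=\{G\in\mathcal G: G\cap\{x,y\}=\emptyset\}$. *)

From mathcomp Require Import all_boot.
Set Implicit Arguments. Unset Strict Implicit. Unset Printing Implicit Defensive.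

Definition k_uniform (n k : nat) (F : {set {set 'I_n}}) : Prop :=
  forall A, A \in F -> #|A| = k.

Definition cross_intersecting (n : nat) (F G : {set {set 'I_n}}) : Prop :=
  forall A B, A \in F -> B \in G -> A :&: B != set0.

Definition link2 (n : nat) (F : {set {set 'I_n}}) (x y : 'I_n) : {set {set 'I_n}} :=
  [set A :\: [set x; y] | A in [set A in F | [set x; y] \subset A]].

Definition avoid2 (n : nat) (G : {set {set 'I_n}}) (x y : 'I_n) : {set {set 'I_n}} :=
  [set B in G | [disjoint B & [set x; y]]].

From mathcomp Require Import all_boot zify.
Set Implicit Arguments. Unset Strict Implicit. Unset Printing Implicit Defensive.

(* Pass to complements inside [n] \ {x, y}: B |-> [n] \ (B + {x, y}) maps
   G(x,y) (the members avoiding x and y) to a family C of (n-k-2)-sets, and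
   cross-intersection says that no member of F(x,y) lies inside a member of C,
   i.e. F(x,y) misses the (k-2)-shadow of C.  That shadow therefore has at most
   C(n-2,k-2) - |F(x,y)| <= C(n-5,k-2) + C(n-6,k-3) members, and Lovasz's
   two-term form of the Kruskal-Katona theorem, applied level by level from k-2
   up to n-k-2, gives |C| <= C(n-5,n-k-2) + C(n-6,n-k-3)
   = C(n-5,k-3) + C(n-6,k-3).  The Kruskal-Katona bounds follow Frankl's
   induction: after shifting towards an element u, split the family into the
   members through u and those avoiding u. *)

Section Shadow.
Variable T : finType.
Implicit Types (C D : {set {set T}}) (A B E : {set T}).

Definition shadow C : {set {set T}} :=
  [set E | [exists A in C, exists x in A, E == A :\ x]].

Definition uniform q C := forall A, A \in C -> #|A| = q.

Lemma shadowP C E :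
  reflect (exists2 A, A \in C & exists2 x, x \in A & E = A :\ x) (E \in shadow C).
Proof.
rewrite inE; apply: (iffP idP).
- by case/exists_inP => A AinC /exists_inP [x xA /eqP ->]; exists A => //; exists x.
- case=> A AinC [x xA ->]; apply/exists_inP; exists A => //.
  by apply/exists_inP; exists x.
Qed.

Lemma mem_shadow C A x : A \in C -> x \in A -> A :\ x \in shadow C.
Proof. by move=> AinC xA; apply/shadowP; exists A => //; exists x. Qed.

Lemma shadow0 : shadow set0 = set0.
Proof. by apply/setP => E; rewrite [RHS]inE; apply/negbTE/negP => /shadowP [A]; rewrite inE. Qed.

Lemma uniform_card_shadow_ge q C : uniform q C -> 0 < #|C| -> q <= #|shadow C|.
Proof.
move=> uC /card_gt0P [A AinC]; rewrite -(uC A AinC).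
have <- : #|[set A :\ x | x in A]| = #|A|.
  apply: card_in_imset => x z xA zA /setP /(_ x).
  rewrite !inE eqxx xA /= andbT => /esym /negbFE.
  by rewrite eq_sym => /eqP.
apply/subset_leq_card/subsetP => _ /imsetP [x xA ->]; exact: mem_shadow.
Qed.

Section Shift.
Variables u j : T.

Definition shift A := u |: (A :\ j).
Definition shiftable C A := [&& j \in A, u \notin A & shift A \notin C].
Definition shift_in C A := if shiftable C A then shift A else A.
Definition shift_fam C := [set shift_in C A | A in C].

Lemma shiftK A : j \in A -> u \notin A -> j |: (shift A :\ u) = A.
Proof.
move=> jA uA; rewrite /shift setU1K ?setD1K //.
by rewrite !inE negb_and uA orbT.
Qed.

Lemma card_shift A : j \in A -> u \notin A -> #|shift A| = #|A|.
Proof.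
move=> jA uA; rewrite /shift cardsU1 (cardsD1 j A) jA !inE negb_and uA orbT.
by rewrite add1n.
Qed.

Lemma mem_shift_fam C A : A \in C -> shift_in C A \in shift_fam C.
Proof. by move=> AinC; apply/imsetP; exists A. Qed.

Lemma mem_shift_fam_shift C A : A \in C -> shiftable C A -> shift A \in shift_fam C.
Proof. by move=> AinC sA; have := mem_shift_fam AinC; rewrite /shift_in sA. Qed.

Lemma mem_shift_fam_fixed C A : A \in C -> ~~ shiftable C A -> A \in shift_fam C.
Proof. by move=> AinC /negbTE sA; have := mem_shift_fam AinC; rewrite /shift_in sA. Qed.

Lemma card_shift_fam C : #|shift_fam C| = #|C|.
Proof.
apply: card_in_imset => A B AinC BinC; rewrite /shift_in.
case sA: (shiftable C A); case sB: (shiftable C B) => //.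
- move: sA sB => /and3P [jA uA _] /and3P [jB uB _] e.
  by rewrite -(shiftK jA uA) -(shiftK jB uB) e.
- by case/and3P: sA => _ _ /negP nA e; case: nA; rewrite e.
- by case/and3P: sB => _ _ /negP nB e; case: nB; rewrite -e.
Qed.

Lemma shift_fam_uniform q C : uniform q C -> uniform q (shift_fam C).
Proof.
move=> uC _ /imsetP [A AinC ->]; rewrite /shift_in.
case sA: (shiftable C A); last exact: uC.
by case/and3P: sA => jA uA _; rewrite card_shift // uC.
Qed.

Lemma shift_setD1 A x : x != u -> shift (A :\ x) = shift A :\ x.
Proof.
move=> xu; apply/setP => z; rewrite !inE.
by case: (eqVneq z u) => [->|zu] /=; [rewrite eq_sym xu | rewrite andbCA].
Qed.

Lemma shift_setD1u A : u \in A -> u != j -> shift (A :\ u) = A :\ j.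
Proof.
move=> uA uj; apply/setP => z; rewrite !inE.
by case: (eqVneq z u) => [->|zu] /=; rewrite ?uA ?uj.
Qed.

Lemma shadow_shift_fam_shifted C A x : A \in C -> shiftable C A -> x \in shift A ->
  shift A :\ x \in shift_fam (shadow C).
Proof.
move=> AinC sA xA'; case/and3P: (sA) => jA uA _.
have uNAj : u \notin A :\ j by rewrite !inE negb_and uA orbT.
case: (eqVneq x u) => [->|xu].
  rewrite /shift setU1K //; apply: mem_shift_fam_fixed; first exact: mem_shadow.
  by rewrite /shiftable !inE eqxx.
move: xA'; rewrite !inE (negbTE xu) /= => /andP [xj xA].
rewrite -shift_setD1 //.
have AxC : A :\ x \in shadow C by apply: mem_shadow.
case: (boolP (shift (A :\ x) \in shadow C)) => sAx.
  by apply: mem_shift_fam_fixed; rewrite // /shiftable /shift setU11 /= andbF.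
by apply: mem_shift_fam_shift; rewrite // /shiftable sAx !inE jA eq_sym xj (negbTE uA) andbF.
Qed.

Lemma shadow_shift_fam_fixed C A x : A \in C -> ~~ shiftable C A -> x \in A ->
  A :\ x \in shift_fam (shadow C).
Proof.
move=> AinC sA xA; apply: mem_shift_fam_fixed; first exact: mem_shadow.
apply/and3P => -[jAx uAx /negP []].
have jA : j \in A by case/setD1P: jAx.
case: (eqVneq x u) => [exu|xu].
  by subst x; rewrite shift_setD1u ?mem_shadow // eq_sym; case/setD1P: jAx.
have uA : u \notin A by move: uAx; rewrite !inE eq_sym xu.
have shC : shift A \in C by move: sA; rewrite /shiftable jA uA /= negbK.
by rewrite shift_setD1 // mem_shadow // !inE (negbTE xu) eq_sym; case/setD1P: jAx => ->.
Qed.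

Lemma shadow_shift_fam C : shadow (shift_fam C) \subset shift_fam (shadow C).
Proof.
apply/subsetP => _ /shadowP [_ /imsetP [A AinC ->] [x xB ->]].
move: xB; rewrite /shift_in; case: ifP => sA xB.
  exact: shadow_shift_fam_shifted.
by apply: shadow_shift_fam_fixed; rewrite ?sA.
Qed.

Lemma card_shadow_shift_fam C : #|shadow (shift_fam C)| <= #|shadow C|.
Proof. by rewrite -(card_shift_fam (shadow C)) subset_leq_card ?shadow_shift_fam. Qed.

End Shift.

Definition stable u D :=
  forall A, A \in D -> u \notin A -> forall j, j \in A -> u |: (A :\ j) \in D.

(* Shifting towards u preserves size, uniformity and (weakly) decreases the
   shadow, so a family maximising the number of members containing u among
   those with these properties is stable under every shift towards u. *)
Lemma exists_stable u q C : uniform q C -> exists D,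
  [/\ uniform q D, #|D| = #|C|, #|shadow D| <= #|shadow C| & stable u D].
Proof.
move=> uC.
pose P D := [&& [forall A in D, #|A| == q], #|D| == #|C| & #|shadow D| <= #|shadow C|].
have PC : P C by rewrite /P eqxx leqnn !andbT; apply/forall_inP => A /uC ->.
case: (arg_maxnP (fun D => #|[set A in D | u \in A]|) PC) => D PD maxD.
case/and3P: PD => /forall_inP uD /eqP cD sD.
have {}uD : uniform q D by move=> A /uD /eqP.
exists D; split => // A AD uA j jA; apply/negPn/negP => nsh.
have PS : P (shift_fam u j D).
  rewrite /P card_shift_fam cD eqxx (leq_trans (card_shadow_shift_fam u j D) sD).
  by rewrite !andbT; apply/forall_inP => B /(shift_fam_uniform uD) ->.
have sub : shift u j A |: [set B in D | u \in B] \subset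
           [set B in shift_fam u j D | u \in B].
  apply/subsetP => B; rewrite in_setU1 !in_set => /orP [/eqP ->|/andP [BD uB]].
    rewrite {2}/shift setU11 andbT.
    by apply: mem_shift_fam_shift; rewrite // /shiftable jA uA nsh.
  by rewrite uB andbT mem_shift_fam_fixed // /shiftable uB andbF.
have := leq_trans (subset_leq_card sub) (maxD _ PS).
by rewrite cardsU1 inE (negbTE nsh) ltnn.
Qed.

Section Link.
Variable u : T.

Definition link1 D := [set B :\ u | B in [set B in D | u \in B]].
Definition avoid1 D := [set B in D | u \notin B].

Lemma link1P D E : reflect (exists2 B, B \in D & u \in B /\ E = B :\ u) (E \in link1 D).
Proof.
apply: (iffP imsetP) => [[B]|[B BD [uB ->]]]; last by exists B; rewrite // inE BD.
by rewrite inE => /andP [BD uB] ->; exists B.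
Qed.

Lemma notin_link1 D E : E \in link1 D -> u \notin E.
Proof. by case/link1P => B _ [_ ->]; rewrite setD11. Qed.

Lemma card_link1_avoid1 D : #|D| = #|link1 D| + #|avoid1 D|.
Proof.
have -> : #|link1 D| = #|D :&: [set B : {set T} | u \in B]|.
  rewrite card_in_imset; first by rewrite setIdE.
  move=> B B'; rewrite !inE => /andP [_ uB] /andP [_ uB'] e.
  by rewrite -(setD1K uB) -(setD1K uB') e.
rewrite -[LHS](cardsID [set B : {set T} | u \in B]) /avoid1 setIdE setDE.
by congr (_ + #|D :&: _|); apply/setP => B; rewrite !inE.
Qed.

Lemma link1_uniform q D : uniform q.+1 D -> uniform q (link1 D).
Proof.
move=> uD _ /link1P [B BD [uB ->]].
by move: (uD B BD); rewrite (cardsD1 u) uB add1n => -[].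
Qed.

Lemma avoid1_uniform q D : uniform q D -> uniform q (avoid1 D).
Proof. by move=> uD B; rewrite inE => /andP [/uD]. Qed.

(* Members of [shadow D] avoiding u contain [link1 D], those containing u
   contain a copy of [shadow (link1 D)]. *)
Lemma card_link1_shadow D : #|link1 D| + #|shadow (link1 D)| <= #|shadow D|.
Proof.
pose I := [set u |: E | E in shadow (link1 D)].
have uNsh E : E \in shadow (link1 D) -> u \notin E.
  by case/shadowP => F /notin_link1 uF [x _ ->]; rewrite !inE negb_and uF orbT.
have <- : #|I| = #|shadow (link1 D)|.
  by apply: card_in_imset => E E' /uNsh uE /uNsh uE' e; rewrite -(setU1K uE) e setU1K.
have disj : link1 D :&: I = set0.
  apply/setP => E; rewrite inE in_set0.
  by apply/andP => -[/notin_link1 + /imsetP [F _ EF]]; rewrite EF setU11.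
rewrite -[_ + _]subn0 -(cards0 {set T}) -disj -cardsU.
apply/subset_leq_card/subsetP => E /setUP [/link1P [B BD [uB ->]]|].
  exact: mem_shadow.
case/imsetP => _ /shadowP [_ /link1P [B BD [uB ->]] [x xB ->]] ->.
have /andP [xu xB'] : (x != u) && (x \in B) by move: xB; rewrite !inE.
suff -> : u |: (B :\ u :\ x) = B :\ x by apply: mem_shadow.
apply/setP => z; rewrite !inE.
by case: (eqVneq z u) => [->|zu] //=; rewrite eq_sym xu uB.
Qed.

Lemma shadow_avoid1_sub D : stable u D -> shadow (avoid1 D) \subset link1 D.
Proof.
move=> sD; apply/subsetP => _ /shadowP [B + [x xB ->]]; rewrite inE => /andP [BD uB].
apply/link1P; exists (u |: (B :\ x)); first exact: sD.
by rewrite setU11 setU1K // !inE negb_and uB orbT.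
Qed.

End Link.

Lemma shadow_split q C : uniform q.+1 C -> exists D1 D0,
  [/\ uniform q D1, uniform q.+1 D0, #|C| = #|D1| + #|D0|,
      #|D1| + #|shadow D1| <= #|shadow C| & #|shadow D0| <= #|D1|].
Proof.
move=> uC; have [C0|[A AinC]] := set_0Vmem C.
  by exists set0, set0; rewrite C0 shadow0 cards0; split=> // ?; rewrite inE.
have /card_gt0P [u _] : 0 < #|A| by rewrite uC.
have [D [uD cD sD stD]] := exists_stable u uC.
exists (link1 u D), (avoid1 u D); split.
- exact: link1_uniform.
- exact: avoid1_uniform.
- by rewrite -cD (card_link1_avoid1 u).
- exact: leq_trans (card_link1_shadow u D) sD.
- exact/subset_leq_card/shadow_avoid1_sub.
Qed.

End Shadow.

Section KruskalKatona.
Variable T : finType.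
Implicit Types (C D : {set {set T}}).

Lemma card_shadow_gt_bin w q C : q <= w -> uniform q.+1 C ->
  'C(w, q.+1) < #|C| -> 'C(w, q) + q <= #|shadow C|.
Proof.
elim: w q C => [|w IH] q C qw uC hC;
  have sC := uniform_card_shadow_ge uC (leq_ltn_trans (leq0n _) hC).
  by move: qw sC; rewrite leqn0 => /eqP ->; rewrite bin0.
case: q qw uC hC sC => [|q] qw uC hC sC; first by rewrite bin0.
have [D1 [D0 [u1 u0 cC s1 s0]]] := shadow_split uC.
have [eqw|qw'] : q = w \/ q < w by lia.
  by subst q; rewrite binn; lia.
have := binS w q.+1; have := binS w q.
have [h1|h1] := ltnP 'C(w, q.+1) #|D1|.
  have := IH q D1 (ltnW qw') u1 h1; lia.
have := IH q.+1 D0 qw' u0; lia.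
Qed.

Lemma card_shadow_gt_bin_add1 z q C : 2 <= q -> q < z -> uniform q.+1 C ->
  'C(z, q.+1).+1 < #|C| -> 'C(z, q) + q.+1 <= #|shadow C|.
Proof.
case: z q => [|z] [|q] // q2 qz uC hC.
have [D1 [D0 [u1 u0 cC s1 s0]]] := shadow_split uC.
have := binS z q.+1; have := binS z q.
have [h1|h1] := ltnP 'C(z, q.+1).+1 #|D1|.
  have := @card_shadow_gt_bin z q D1 (ltnW qz) u1 (ltnW h1); lia.
have := @card_shadow_gt_bin z q.+1 D0 qz u0; lia.
Qed.

Lemma card_shadow_ge_bin2 y1 r y2 C : r.+2 <= y2 -> y2 < y1 -> uniform r.+2 C ->
  'C(y1, r.+2) + 'C(y2, r.+1) <= #|C| -> 'C(y1, r.+1) + 'C(y2, r) <= #|shadow C|.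
Proof.
elim: y1 r y2 C => [|a IH] r [|b] C // ry2 y12 uC hC.
have [D1 [D0 [u1 u0 cC s1 s0]]] := shadow_split uC.
have := binS a r.+1; have := binS b r.
have [h1|h1] := leqP ('C(a, r.+1) + 'C(b, r)) #|D1|.
  case: r ry2 uC hC u1 u0 h1 => [|r] ry2 uC hC u1 u0 h1.
    have := binS a 0; have := uniform_card_shadow_ge u1; rewrite !bin0 in h1 *; lia.
  have := binS a r.+1; have := binS b r; have := IH r b D1 ry2 y12 u1 h1; lia.
have [rb|eb] : r.+2 <= b \/ b = r.+1 by lia.
  have := IH r b D0 rb y12 u0; lia.
subst b; have := binn r.+1; have := binSn r.
have := @card_shadow_gt_bin a r.+1 D0 (ltnW y12) u0; lia.
Qed.

Lemma card_shadow_gt_bin2 y1 r y2 C : r.+3 <= y2 -> y2 < y1 -> uniform r.+3 C ->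
  'C(y1, r.+3) + 'C(y2, r.+2) < #|C| -> 'C(y1, r.+2) + 'C(y2, r.+1) < #|shadow C|.
Proof.
elim: y1 y2 C => [|a IH] [|b] C // ry2 y12 uC hC.
have [D1 [D0 [u1 u0 cC s1 s0]]] := shadow_split uC.
have := binS a r.+2; have := binS a r.+1; have := binS b r.+1; have := binS b r.
have [h1|h1] := ltnP ('C(a, r.+2) + 'C(b, r.+1)) #|D1|.
  have := @card_shadow_ge_bin2 a r b D1 ry2 y12 u1 (ltnW h1); lia.
have [rb|eb] : r.+3 <= b \/ b = r.+2 by lia.
  have := IH b D0 rb y12 u0; lia.
subst b; have := binn r.+2; have := binSn r.+1.
have := @card_shadow_gt_bin_add1 a r.+2 D0 isT y12 u0; lia.
Qed.
End KruskalKatona.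

Section LevelShadow.
Variable T : finType.
Implicit Types (C : {set {set T}}).

Definition level_shadow C r :=
  [set E : {set T} | (#|E| == r) && [exists B in C, E \subset B]].

Lemma level_shadow_uniform C r : uniform r (level_shadow C r).
Proof. by move=> E; rewrite inE => /andP [/eqP]. Qed.

Lemma shadow_level_shadow p C r : uniform p C -> r < p ->
  shadow (level_shadow C r.+1) = level_shadow C r.
Proof.
move=> uC rp; apply/setP => E; apply/idP/idP.
  case/shadowP => A; rewrite inE => /andP [/eqP cA /exists_inP [B BC AB]] [x xA ->].
  rewrite (cardsD1 x A) xA add1n in cA; case: cA => cA; rewrite inE cA eqxx /=.
  by apply/exists_inP; exists B => //; apply: subset_trans AB; apply: subD1set.
rewrite inE => /andP [/eqP cE /exists_inP [B BC EB]].
have /properP [_ [z zB zE]] : E \proper B by rewrite properEcard EB cE (uC B BC).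
apply/shadowP; exists (z |: E); last by exists z; rewrite ?setU11 ?setU1K.
rewrite inE cardsU1 zE cE eqxx /=; apply/exists_inP; exists B => //.
by rewrite subUset sub1set zB EB.
Qed.

Lemma level_shadow_id p C : uniform p C -> level_shadow C p = C.
Proof.
move=> uC; apply/setP => E; apply/idP/idP => [|EC].
  rewrite inE => /andP [/eqP cE /exists_inP [B BC EB]].
  suff /eqP -> : E == B by [].
  by rewrite eqEcard EB (uC B BC) cE leqnn.
by rewrite inE (uC E EC) eqxx; apply/exists_inP; exists E.
Qed.

Lemma card_le_bin2_of_level_shadow M1 M2 a p C : uniform p.+2 C ->
  a <= p -> p.+2 <= M2 -> M2 < M1 ->
  #|level_shadow C a.+2| <= 'C(M1, a.+2) + 'C(M2, a.+1) ->
  #|C| <= 'C(M1, p.+2) + 'C(M2, p.+1).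
Proof.
move=> uC ap pM M12 ha.
suff /(_ (p - a) (leqnn _)) : forall i, i <= p - a ->
    #|level_shadow C (a + i).+2| <= 'C(M1, (a + i).+2) + 'C(M2, (a + i).+1).
  by rewrite subnKC // (level_shadow_id uC).
elim=> [|i IH] hi; first by rewrite addn0.
rewrite leqNgt addnS; apply/negP.
move/(card_shadow_gt_bin2 _ M12 (@level_shadow_uniform C _)).
rewrite (shadow_level_shadow uC); last by lia.
by move/(_ ltac:(lia)); rewrite ltnNge IH // ltnW.
Qed.
End LevelShadow.

Section Complement.
Variables (T : finType) (X : {set T}).
Implicit Types (A B E : {set T}) (G : {set {set T}}).

Definition compl_fam G := [set ~: (B :|: X) | B in G].

Lemma card_compl_fam G : {in G, forall B, [disjoint B & X]} -> #|compl_fam G| = #|G|.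
Proof.
have K B : [disjoint B & X] -> ~: ~: (B :|: X) :\: X = B.
  by move/setDidPl; rewrite setCK setDUl setDv setU0.
move=> dG; apply: card_in_imset => B B' /dG dB /dG dB' e.
by rewrite -(K B dB) e K.
Qed.

Lemma compl_fam_uniform q G : {in G, forall B, [disjoint B & X]} -> uniform q G ->
  uniform (#|T| - q - #|X|) (compl_fam G).
Proof.
move=> dG uG _ /imsetP [B BG ->].
have := cardsC (B :|: X).
rewrite cardsU (disjoint_setI0 (dG B BG)) cards0 subn0 (uG B BG); lia.
Qed.

Lemma level_shadow_compl_fam G r E : E \in level_shadow (compl_fam G) r ->
  E \subset ~: X /\ #|E| = r.
Proof.
rewrite inE => /andP [/eqP cE /exists_inP [_ /imsetP [B _ ->] EB]]; split=> //.
by apply: subset_trans EB _; rewrite setCS subsetUr.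
Qed.

Lemma setD_subsetCU A B : [disjoint B & X] ->
  (A :\: X \subset ~: (B :|: X)) = [disjoint A & B].
Proof.
move=> dBX; rewrite disjoints_subset; apply/subsetP/subsetP => sub z.
  case zX: (z \in X); first by rewrite inE (disjointFl dBX zX).
  by move=> zA; have := sub z; rewrite !inE zX zA negb_or => /(_ isT) /andP [].
by rewrite !inE => /andP [zX /sub]; rewrite inE negb_or zX => ->.
Qed.
End Complement.

Lemma card_disjoint_draws (T : finType) (Y : {set T}) r (P Q : {set {set T}}) :
  [disjoint P & Q] -> (forall E, E \in P :|: Q -> E \subset Y /\ #|E| = r) ->
  #|P| + #|Q| <= 'C(#|Y|, r).
Proof.
move=> dPQ PQY; rewrite -cards_draws -[_ + _]subn0 -(cards0 {set T}).
rewrite -(disjoint_setI0 dPQ) -cardsU.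
by apply/subset_leq_card/subsetP => E /PQY [EY cE]; rewrite inE EY cE eqxx.
Qed.

Lemma binS_expand4 m p :
  'C(m.+4, p.+2) = 'C(m.+3, p.+1) + 'C(m.+2, p.+1) + 'C(m, p) + 'C(m.+1, p.+2) + 'C(m, p.+1).
Proof.
have := binS m.+3 p.+1; have := binS m.+2 p.+1; have := binS m.+1 p.+1.
have := binS m p; lia.
Qed.

Lemma card_le_of_level_shadow_budget m p q (T : finType) (C : {set {set T}}) :
  uniform q.+2 C -> p <= q -> p + q + 2 = m ->
  'C(m.+3, p.+1) + 'C(m.+2, p.+1) + 'C(m, p) + #|level_shadow C p.+2| <= 'C(m.+4, p.+2) ->
  #|C| <= 'C(m.+1, p.+1) + 'C(m, p.+1).
Proof.
move=> uC pq em; rewrite binS_expand4 => hC.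
have hS : #|level_shadow C p.+2| <= 'C(m.+1, p.+2) + 'C(m, p.+1) by lia.
have := card_le_bin2_of_level_shadow uC pq _ (ltnSn m) hS.
have -> : 'C(m.+1, p.+1) = 'C(m.+1, q.+2) by rewrite -bin_sub; [congr 'C(_, _) |]; lia.
have -> : 'C(m, p.+1) = 'C(m, q.+1) by rewrite -bin_sub; [congr 'C(_, _) |]; lia.
by apply; lia.
Qed.

Section PairLink.
Variables (n k : nat) (F G : {set {set 'I_n}}) (x y : 'I_n).
Hypotheses (uF : k_uniform k F) (uG : k_uniform k G) (cFG : cross_intersecting F G).
Hypothesis xy : x != y.

Let X := [set x; y].
Let C := compl_fam X (avoid2 G x y).

Lemma avoid2_disjoint : {in avoid2 G x y, forall B : {set 'I_n}, [disjoint B & X]}.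
Proof. by move=> B; rewrite inE => /andP []. Qed.

Lemma card_compl_avoid2 : #|C| = #|avoid2 G x y|.
Proof. exact/card_compl_fam/avoid2_disjoint. Qed.

Lemma compl_avoid2_uniform : uniform (n - k - 2) C.
Proof.
have uG2 : uniform k (avoid2 G x y) by move=> B; rewrite inE => /andP [/uG].
by have := compl_fam_uniform avoid2_disjoint uG2; rewrite card_ord cards2 xy subnAC.
Qed.

(* [F(x,y)] and this shadow are disjoint families of (k-2)-subsets of [n] \ {x, y}. *)
Lemma card_link2_level_shadow :
  #|link2 F x y| + #|level_shadow C (k - 2)| <= 'C(n - 2, k - 2).
Proof.
have cX : #|X| = 2 by rewrite cards2 xy.
have -> : n - 2 = #|~: X| by have := cardsC X; rewrite card_ord cX; lia.
apply: card_disjoint_draws => [|E].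
  rewrite -setI_eq0; apply/eqP/setP => E; rewrite !inE andbC; apply/negbTE/negP.
  case/andP => /andP [_ /exists_inP [_ /imsetP [B + ->] EB]].
  rewrite inE => /andP [BG dBX] /imsetP [A]; rewrite inE => /andP [AF XA] eE.
  by have := cFG AF BG; rewrite setI_eq0 -(setD_subsetCU A dBX) -eE EB.
case/setUP => [/imsetP [A]|/level_shadow_compl_fam //].
rewrite inE => /andP [AF XA] ->; split; first by rewrite setDE subsetIr.
by rewrite cardsD (setIidPr XA) (uF AF) cX.
Qed.
End PairLink.

Theorem mainTheorem12 (n k : nat) (F G : {set {set 'I_n}}) (x y : 'I_n) :
  4 <= k -> 2 * k <= n ->
  k_uniform k F -> k_uniform k G ->
  cross_intersecting F G ->
  x != y ->
  'C(n - 3, k - 3) + 'C(n - 4, k - 3) + 'C(n - 6, k - 4) <= #|link2 F x y| ->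
  #|avoid2 G x y| <= 'C(n - 5, k - 3) + 'C(n - 6, k - 3).
Proof.
move=> k4 nk uF uG cFG xy hF.
have [en2 en3 en4 en5] : [/\ n - 2 = (n - 6).+4, n - 3 = (n - 6).+3,
  n - 4 = (n - 6).+2 & n - 5 = (n - 6).+1] by split; lia.
have [ek2 ek3 ekn] : [/\ k - 2 = (k - 4).+2, k - 3 = (k - 4).+1 &
  n - k - 2 = (n - k - 4).+2] by split; lia.
rewrite -(card_compl_avoid2 G) en5 ek3.
apply: (card_le_of_level_shadow_budget (q := n - k - 4)); [|lia|lia|].
  by rewrite -ekn; apply: compl_avoid2_uniform.
rewrite -en2 -ek2 -en3 -en4 -ek3.
exact: leq_trans (leq_add hF (leqnn _)) (card_link2_level_shadow uF cFG xy).
Qed.
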